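(* Let trimming proportions satisfy instead $0\le a_i\le a_j<\bar b_i\le\bar b_j\le1$ (with $\bar v:=1-v$), and assume the integrals $\kappa_m$ below are finite. Then (i) $\zeta(a_i,\bar b_j)>0$; (iii) $0<\zeta_r\le1$; (iv) $\kappa_2(a_j,\bar b_j)\ge\zeta_r\,\kappa_1^2(a_i,\bar b_i)$; (v) for all $\sigma>0,\beta>0$, $T_2-\zeta_rT_1^2\ge0$; and, in place of the ordering in the previous case, $\kappa_m(a_i,\bar b_i)\ge\kappa_m(a_j,\bar b_j)$ for every odd positive integer $m$.
   Context: $\Delta(u):=\log(-\log u)$ for $u\in(0,1)$. For $0\le a<b\le1$, $\kappa_m(a,b):=\frac{1}{b-a}\int_a^b[\Delta(u)]^m\,du$. For indices $s,t$, $\zeta(a_s,\bar b_t):=\kappa_1^2(a_s,\bar b_s)-2\kappa_1(a_s,\bar b_s)\kappa_1(a_t,\bar b_t)+\kappa_2(a_t,\bar b_t)$, and $\zeta_r:=\zeta(a_j,\bar b_j)/\zeta(a_i,\bar b_j)$. $T_1=\log\sigma-\beta\kappa_1(a_i,\bar b_i)$, $T_2=(\log\sigma)^2-2\beta\log(\sigma)\kappa_1(a_j,\bar b_j)+\beta^2\kappa_2(a_j,\bar b_j)$. *)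

From HB Require Import structures.
From mathcomp Require Import all_boot all_order all_algebra.
From mathcomp Require Import all_classical all_reals all_analysis.
Set Implicit Arguments. Unset Strict Implicit. Unset Printing Implicit Defensive.
Import Order.TTheory GRing.Theory Num.Theory.
Local Open Scope classical_set_scope.
Local Open Scope ring_scope.

Definition Delta (R : realType) (u : R) : R := ln (- ln u).

Definition kappa (R : realType) (m : nat) (a b : R) : R :=
  (b - a)^-1 * Rintegral (@lebesgue_measure R) `[a, b] (fun u => Delta u ^+ m).

(* zeta(a_s, bbar_t) with (a_s, bbar_s) and (a_t, bbar_t) the two intervals *)
Definition zeta (R : realType) (as_ bs at_ bt : R) : R :=
  kappa 1 as_ bs ^+ 2 - 2 * kappa 1 as_ bs * kappa 1 at_ bt + kappa 2 at_ bt.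

Definition zeta_r (R : realType) (ai bbi aj bbj : R) : R :=
  zeta aj bbj aj bbj / zeta ai bbi aj bbj.

Definition T1 (R : realType) (ai bbi : R) (sigma beta : R) : R :=
  ln sigma - beta * kappa 1 ai bbi.

Definition T2 (R : realType) (aj bbj : R) (sigma beta : R) : R :=
  ln sigma ^+ 2 - 2 * beta * ln sigma * kappa 1 aj bbj + beta ^+ 2 * kappa 2 aj bbj.

From HB Require Import structures.
From mathcomp Require Import all_boot all_order all_algebra.
From mathcomp Require Import all_classical all_reals all_analysis.
From mathcomp Require Import ring lra.
Import Order.TTheory GRing.Theory Num.Theory.
Local Open Scope classical_set_scope.
Local Open Scope ring_scope.

(* kappa_m(a, b) is the mean of Delta^m over [a, b], and Delta = ln (- ln _)
   is strictly decreasing on ]0, 1[, hence so is Delta^m for odd m.  Moving a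
   window to the right can only lower the mean of a nonincreasing function,
   which gives the inequalities between odd moments.  Since Delta is not
   constant on [a_j, 1 - b_j], its variance V := kappa_2 - kappa_1^2 there is
   positive.  Writing x, y for kappa_1 on the two windows, zeta(a_j, b_j) = V
   and zeta(a_i, b_j) = (x - y)^2 + V, so 0 < zeta_r <= 1, and the remaining
   claims follow from the identity
     zeta(a_i, b_j) T2 = V T1^2 + ((s - l y)(x - y) + l V)^2
   with s = ln sigma and l = beta. *)

Section IntervalIntegral.
Context {R : realType}.
Notation mu := (@lebesgue_measure R).
Implicit Types (f g : R -> R) (a b u v k : R).

(* [kappa m a b] is convertibly [itv_mean (fun u => Delta u ^+ m) a b]. *)
Definition itv_mean f a b : R := (b - a)^-1 * Rintegral mu `[a, b] f.

Lemma integrable_itv_cst a b k : mu.-integrable `[a, b] (EFin \o cst k).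
Proof.
apply: continuous_compact_integrable; first exact: segment_compact.
by apply: continuous_subspaceT => x; exact: cst_continuous.
Qed.

Lemma Rintegral_itv_cst a b k : a <= b -> Rintegral mu `[a, b] (fun=> k) = k * (b - a).
Proof.
move=> ab; have mu_ab : fine (mu `[a, b]) = b - a.
  rewrite lebesgue_measure_itv /= lte_fin.
  by case: ltgtP ab => //= -> _; rewrite subrr.
by rewrite Rintegral_cst // mu_ab.
Qed.

Lemma integrable_subitv {f a b u v} : a <= u -> v <= b ->
  mu.-integrable `[a, b] (EFin \o f) -> mu.-integrable `[u, v] (EFin \o f).
Proof. by move=> au vb fi; apply: integrableS fi => //; apply: subset_itv; rewrite bnd_simp. Qed.

Lemma Rintegral_itv_split {f a u b} : a <= u -> u <= b ->
  mu.-integrable `[a, b] (EFin \o f) ->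
  Rintegral mu `[a, b] f = Rintegral mu `[a, u] f + Rintegral mu `[u, b] f.
Proof.
move=> au ub fi.
rewrite -(@Rintegral_itv_obnd_cbnd R u (BRight b) f); last first.
  by apply: integrableS fi => //; apply: subset_itvr; rewrite bnd_simp.
have := @Rintegral_itvB R f (BLeft a) (BRight b) u fi.
by rewrite !bnd_simp => /(_ au ub) <-; rewrite subrKC.
Qed.

Lemma le_Rintegral_itv f g a b :
  mu.-integrable `[a, b] (EFin \o f) -> mu.-integrable `[a, b] (EFin \o g) ->
  (forall x, a < x < b -> f x <= g x) ->
  Rintegral mu `[a, b] f <= Rintegral mu `[a, b] g.
Proof.
move=> fi gi fg.
have oo (h : R -> R) : mu.-integrable `[a, b] (EFin \o h) ->
    Rintegral mu `[a, b] h = Rintegral mu `]a, b[ h.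
  move=> hi; rewrite /Rintegral integral_itv_bndoo //.
  by apply: (measurable_int mu); apply: integrableS hi => //; apply: subset_itv; rewrite bnd_simp.
rewrite (oo f fi) (oo g gi); apply: le_Rintegral => //.
- by apply: integrableS fi => //; apply: subset_itv; rewrite bnd_simp.
- by apply: integrableS gi => //; apply: subset_itv; rewrite bnd_simp.
Qed.


Lemma Rintegral_itv_ge_cst {f a b k} : a <= b -> mu.-integrable `[a, b] (EFin \o f) ->
  (forall x, a < x < b -> k <= f x) -> k * (b - a) <= Rintegral mu `[a, b] f.
Proof.
by move=> ab fi kf; rewrite -Rintegral_itv_cst //; apply: le_Rintegral_itv => //; exact: integrable_itv_cst.
Qed.

Lemma Rintegral_itv_le_cst {f a b k} : a <= b -> mu.-integrable `[a, b] (EFin \o f) ->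
  (forall x, a < x < b -> f x <= k) -> Rintegral mu `[a, b] f <= k * (b - a).
Proof.
by move=> ab fi fk; rewrite -Rintegral_itv_cst //; apply: le_Rintegral_itv => //; exact: integrable_itv_cst.
Qed.

Lemma Rintegral_itv_gt0 {f a u v b k} : a <= u -> u < v -> v <= b -> 0 < k ->
  mu.-integrable `[a, b] (EFin \o f) -> (forall x, a <= x <= b -> 0 <= f x) ->
  (forall x, u < x < v -> k <= f x) -> 0 < Rintegral mu `[a, b] f.
Proof.
move=> au uv vb k0 fi f0 kf.
have ge0 p q : a <= p -> q <= b -> 0 <= Rintegral mu `[p, q] f.
  move=> ap qb; apply: Rintegral_ge0 => x; rewrite /= in_itv /= => /andP[px xq].
  by apply: f0; rewrite (le_trans ap px) (le_trans xq qb).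
have ub : u <= b by rewrite (le_trans (ltW uv) vb).
rewrite (Rintegral_itv_split au ub fi) (Rintegral_itv_split (ltW uv) vb); last first.
  exact: integrable_subitv fi.
apply: ltr_wpDl (ge0 _ _ (lexx a) ub) _; apply: ltr_wpDr (ge0 _ _ (ltW (le_lt_trans au uv)) (lexx b)) _.
apply: lt_le_trans (Rintegral_itv_ge_cst (ltW uv) (integrable_subitv au vb fi) kf).
by rewrite mulr_gt0 // subr_gt0.
Qed.

End IntervalIntegral.

Section ItvMeanMonotone.
Context {R : realType}.
Notation mu := (@lebesgue_measure R).

Lemma itv_mean_split_le {f : R -> R} {a u b} : a < u -> u < b ->
  mu.-integrable `[a, b] (EFin \o f) ->
  (forall x y, a < x -> x <= y -> y < b -> f y <= f x) ->
  itv_mean f u b <= itv_mean f a b <= itv_mean f a u.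
Proof.
move=> au ub fi fdec.
have left_ge : f u * (u - a) <= Rintegral mu `[a, u] f.
  apply: Rintegral_itv_ge_cst (ltW au) (integrable_subitv (lexx a) (ltW ub) fi) _.
  by move=> x /andP[ax xu]; apply: fdec => //; rewrite ltW.
have right_le : Rintegral mu `[u, b] f <= f u * (b - u).
  apply: Rintegral_itv_le_cst (ltW ub) (integrable_subitv (ltW au) (lexx b) fi) _.
  by move=> x /andP[ux xb]; apply: fdec => //; rewrite ?ltW // (lt_trans au ux).
rewrite /itv_mean (Rintegral_itv_split (ltW au) (ltW ub) fi).
move: left_ge right_le; set L := Rintegral _ _ _; set M := Rintegral _ _ _ => left_ge right_le.
have cross : M * (u - a) <= L * (b - u).
  apply: (le_trans (y := f u * (b - u) * (u - a))); first by rewrite ler_wpM2r // subr_ge0 ltW.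
  by rewrite mulrAC ler_wpM2r // subr_ge0 ltW.
have ua0 : 0 < u - a by rewrite subr_gt0.
have bu0 : 0 < b - u by rewrite subr_gt0.
have ba0 : 0 < b - a by rewrite subr_gt0 (lt_trans au ub).
apply/andP; split.
- rewrite mulrC ler_pdivrMr // [(b - a)^-1 * _]mulrC mulrAC ler_pdivlMr //; nra.
- rewrite mulrC ler_pdivrMr // [(u - a)^-1 * _]mulrC mulrAC ler_pdivlMr //; nra.
Qed.

Lemma le_itv_mean_shift {f : R -> R} {a a' b b'} : a <= a' -> a' < b -> b <= b' ->
  mu.-integrable `[a, b] (EFin \o f) -> mu.-integrable `[a', b'] (EFin \o f) ->
  (forall x y, a < x -> x <= y -> y < b' -> f y <= f x) ->
  itv_mean f a' b' <= itv_mean f a b.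
Proof.
move=> aa' a'b bb' fi fi' fdec.
have fdec_ab x y : a < x -> x <= y -> y < b -> f y <= f x.
  by move=> ax xy yb; apply: fdec ax xy (lt_le_trans yb bb').
apply: (le_trans (y := itv_mean f a' b)).
  move: bb' fi' fdec; rewrite le_eqVlt => /predU1P[<-//|bb'] fi' fdec.
  have fdec_a'b' x y : a' < x -> x <= y -> y < b' -> f y <= f x.
    by move=> a'x; apply: fdec (le_lt_trans aa' a'x).
  by have /andP[] := itv_mean_split_le a'b bb' fi' fdec_a'b'.
move: aa' fi fdec_ab; rewrite le_eqVlt => /predU1P[<-//|aa'] fi fdec_ab.
by have /andP[] := itv_mean_split_le aa' a'b fi fdec_ab.
Qed.

End ItvMeanMonotone.

Section ItvMeanSqr.
Context {R : realType}.
Notation mu := (@lebesgue_measure R).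
Variables (f : R -> R) (a b : R).
Hypotheses (ab : a < b) (fi : mu.-integrable `[a, b] (EFin \o f))
  (f2i : mu.-integrable `[a, b] (EFin \o (fun x => f x ^+ 2))).

Let sqr_sub_expand c x : (f x - c) ^+ 2 = f x ^+ 2 + (- 2 * c) * f x + c ^+ 2.
Proof. ring. Qed.

Let integrable_lin c :
  mu.-integrable `[a, b] (EFin \o (fun x => f x ^+ 2 + (- 2 * c) * f x)).
Proof.
by apply: (eq_integrable _ _ _ _ (integrableD _ f2i (integrableZl _ (- 2 * c) fi))).
Qed.

Lemma integrable_sqr_sub c : mu.-integrable `[a, b] (EFin \o (fun x => (f x - c) ^+ 2)).
Proof.
apply: (eq_integrable _ _ _ _ (integrableD _ (integrable_lin c) (integrable_itv_cst a b (c ^+ 2)))) => //.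
by move=> x _; rewrite /= sqr_sub_expand.
Qed.

Lemma Rintegral_sqr_sub c : Rintegral mu `[a, b] (fun x => (f x - c) ^+ 2) =
  Rintegral mu `[a, b] (fun x => f x ^+ 2) - 2 * c * Rintegral mu `[a, b] f + c ^+ 2 * (b - a).
Proof.
under eq_Rintegral do rewrite sqr_sub_expand.
rewrite (RintegralD _ (integrable_lin c) (integrable_itv_cst a b (c ^+ 2))) //.
rewrite (RintegralD _ f2i (integrableZl _ (- 2 * c) fi)) // (RintegralZl _ _ fi) //.
by rewrite Rintegral_itv_cst ?ltW //; ring.
Qed.

Hypothesis fdec : forall x y, a < x -> x < y -> y < b -> f y < f x.

Lemma Rintegral_sqr_sub_gt0 c : 0 < Rintegral mu `[a, b] (fun x => (f x - c) ^+ 2).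
Proof.
have dev_ge0 x : a <= x <= b -> 0 <= (f x - c) ^+ 2 by move=> _; exact: sqr_ge0.
have [ap pb] := midf_lt ab; set p := (a + b) / 2 in ap pb.
have [pr rb] := midf_lt pb; set r := (p + b) / 2 in pr rb.
have frp : f r < f p by apply: fdec.
(* Either c < f p, and f - c stays above f p - c > 0 on ]a, p[, or
   c >= f p > f r, and c - f stays above c - f r > 0 on ]r, b[. *)
have [cp|pc] := ltP c (f p).
- apply: (Rintegral_itv_gt0 (k := (f p - c) ^+ 2) (lexx a) ap (ltW (lt_trans pr rb))
    _ (integrable_sqr_sub c) dev_ge0); first by rewrite exprn_gt0 // subr_gt0.
  move=> x /andP[ax xp]; have : f p < f x by apply: fdec; lra.
  by move=> fpx; nra.
- apply: (Rintegral_itv_gt0 (k := (c - f r) ^+ 2) (ltW (lt_trans ap pr)) rb (lexx b)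
    _ (integrable_sqr_sub c) dev_ge0); first by rewrite exprn_gt0 // subr_gt0 (lt_le_trans frp).
  move=> x /andP[rx xb]; have : f x < f r by apply: fdec; lra.
  by move=> fxr; nra.
Qed.

Lemma lt_sqr_itv_mean : itv_mean f a b ^+ 2 < itv_mean (fun x => f x ^+ 2) a b.
Proof.
have ba0 : 0 < b - a by rewrite subr_gt0.
set c := itv_mean f a b.
have f_int : Rintegral mu `[a, b] f = c * (b - a).
  by rewrite /c /itv_mean mulrAC mulVf ?mul1r // gt_eqF.
have := Rintegral_sqr_sub_gt0 c; rewrite Rintegral_sqr_sub f_int => dev_gt0.
by rewrite /itv_mean mulrC ltr_pdivlMr //; lra.
Qed.

End ItvMeanSqr.

Section OddPower.
Context {R : realDomainType}.

Lemma ler_oddXn2 (n : nat) (x y : R) : odd n -> x <= y -> x ^+ n <= y ^+ n.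
Proof.
move=> on xy.
have [x0|x0] := lerP 0 x; first by rewrite lerXn2r // nnegrE (le_trans x0).
have [y0|y0] := lerP 0 y.
  by rewrite (@le_trans _ _ 0) ?exprn_odd_le0 ?exprn_odd_ge0 // ltW.
have oppX z : (- z) ^+ n = - z ^+ n by rewrite exprNn -signr_odd on expr1 mulN1r.
by rewrite -lerN2 -!oppX lerXn2r ?lerN2 // nnegrE oppr_ge0 ltW.
Qed.

End OddPower.

Section DeltaMonotone.
Context {R : realType}.

Lemma Delta_decreasing (x y : R) : 0 < x -> x < y -> y < 1 -> Delta y < Delta x.
Proof.
move=> x0 xy y1; rewrite /Delta.
have lnxy : ln x < ln y by rewrite ltr_ln ?posrE // (lt_trans x0 xy).
have lny0 : ln y < 0 by apply: ln_lt0; rewrite (lt_trans x0 xy) y1.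
by rewrite ltr_ln ?posrE ?oppr_gt0 ?ltrN2 // (lt_trans lnxy lny0).
Qed.

Lemma le_oddX_Delta (m : nat) (x y : R) : odd m -> 0 < x -> x <= y -> y < 1 ->
  Delta y ^+ m <= Delta x ^+ m.
Proof.
move=> om x0; rewrite le_eqVlt => /predU1P[->//|xy] y1.
exact/ler_oddXn2/ltW/Delta_decreasing.
Qed.

End DeltaMonotone.

Section MomentRatio.
Variables (R : realFieldType) (x y z : R).
Hypothesis var_gt0 : y ^+ 2 < z.

Let cross_moment_sqr : x ^+ 2 - 2 * x * y + z = (x - y) ^+ 2 + (z - y ^+ 2).
Proof. ring. Qed.

Lemma cross_moment_gt0 : 0 < x ^+ 2 - 2 * x * y + z.
Proof. by rewrite cross_moment_sqr ltr_wpDl ?sqr_ge0 // subr_gt0. Qed.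

Lemma moment_ratio_gt0 : 0 < (z - y ^+ 2) / (x ^+ 2 - 2 * x * y + z).
Proof. by rewrite divr_gt0 ?cross_moment_gt0 // subr_gt0. Qed.

Lemma moment_ratio_le1 : (z - y ^+ 2) / (x ^+ 2 - 2 * x * y + z) <= 1.
Proof. by rewrite ler_pdivrMr ?cross_moment_gt0 // mul1r cross_moment_sqr lerDr sqr_ge0. Qed.

Lemma moment_ratio_quadratic_le (s l : R) :
  (z - y ^+ 2) / (x ^+ 2 - 2 * x * y + z) * (s - l * x) ^+ 2 <=
  s ^+ 2 - 2 * l * s * y + l ^+ 2 * z.
Proof.
rewrite mulrAC ler_pdivrMr ?cross_moment_gt0 //.
have -> : (s ^+ 2 - 2 * l * s * y + l ^+ 2 * z) * (x ^+ 2 - 2 * x * y + z) =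
    (z - y ^+ 2) * (s - l * x) ^+ 2 + ((s - l * y) * (x - y) + l * (z - y ^+ 2)) ^+ 2.
  by ring.
by rewrite lerDl sqr_ge0.
Qed.

Lemma moment_ratio_sqr_le : (z - y ^+ 2) / (x ^+ 2 - 2 * x * y + z) * x ^+ 2 <= z.
Proof.
have := moment_ratio_quadratic_le 0 (- 1).
by rewrite sub0r mulN1r opprK expr0n /= mulr0 sqrrN expr1n mul1r mul0r subr0 add0r.
Qed.

End MomentRatio.

Theorem corollary3 (R : realType) (a_i a_j b_i b_j : R) :
  0 <= a_i -> a_i <= a_j -> a_j < 1 - b_i -> 1 - b_i <= 1 - b_j -> 1 - b_j <= 1 ->
  (forall m : nat, (0 < m)%N ->
     (@lebesgue_measure R).-integrable `[a_i, 1 - b_i]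
        (fun u => (Delta u ^+ m)%:E) /\
     (@lebesgue_measure R).-integrable `[a_j, 1 - b_j]
        (fun u => (Delta u ^+ m)%:E)) ->
  let zr := zeta_r a_i (1 - b_i) a_j (1 - b_j) in
  [/\ 0 < zeta a_i (1 - b_i) a_j (1 - b_j),
      0 < zr /\ zr <= 1,
      kappa 2 a_j (1 - b_j) >= zr * kappa 1 a_i (1 - b_i) ^+ 2,
      (forall sigma beta : R, 0 < sigma -> 0 < beta ->
         T2 a_j (1 - b_j) sigma beta - zr * T1 a_i (1 - b_i) sigma beta ^+ 2 >= 0) &
      (forall m : nat, odd m ->
         kappa m a_i (1 - b_i) >= kappa m a_j (1 - b_j))].
Proof.
move=> ai0 aij ajbi bij bj1 integrable_Delta zr.
have [_ Delta_int] := integrable_Delta 1%N isT.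
have [_ Delta2_int] := integrable_Delta 2%N isT.
have var_gt0 : kappa 1 a_j (1 - b_j) ^+ 2 < kappa 2 a_j (1 - b_j).
  apply: (lt_sqr_itv_mean (@Delta R)) => //; first exact: lt_le_trans ajbi bij.
  move=> x y ajx xy ybj; apply: Delta_decreasing xy (lt_le_trans ybj bj1).
  exact: le_lt_trans (le_trans ai0 aij) ajx.
have zrE : zr = (kappa 2 a_j (1 - b_j) - kappa 1 a_j (1 - b_j) ^+ 2) /
    zeta a_i (1 - b_i) a_j (1 - b_j).
  by rewrite /zr /zeta_r /zeta; congr (_ / _); ring.
rewrite zrE; split.
- exact: cross_moment_gt0.
- by split; [exact: moment_ratio_gt0 | exact: moment_ratio_le1].
- exact: moment_ratio_sqr_le.
- by move=> sigma beta _ _; rewrite subr_ge0; exact: moment_ratio_quadratic_le.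
move=> m om; have [mi mj] := integrable_Delta m (odd_gt0 om).
apply: (le_itv_mean_shift aij ajbi bij mi mj).
move=> x y aix xy ybj; apply: le_oddX_Delta xy (lt_le_trans ybj bj1) => //.
exact: le_lt_trans ai0 aix.
Qed.
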